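(* Let $\mathcal{E}=\{|\varphi_i\rangle,p_i\}_{i\in\mathcal I}$ be a finite ensemble of pure states on $\mathbb{C}^d$. Let $\{a_k\}_{k\in\mathcal K}$ be a finite probability distribution, and let $U_k$ be unitary operators on $\mathbb{C}^d$. Let $\mathcal F$ be the ensemble $\{U_k|\varphi_i\rangle,\ p_ia_k\}_{(i,k)\in\mathcal I\times\mathcal K}$. Then for every $R\ge0$, $M(\mathcal{E},R)\le M(\mathcal F,R)$.
   Context: For a finite pure-state ensemble $\mathcal G=\{|\chi_x\rangle,s_x\}_{x\in\mathcal X}$, define $M(\mathcal G,R)$ as follows. For a finite set $\mathcal J$ and conditional distribution $p(j|x)$, let $\rho^{ABC}=\sum_xs_x|x\rangle\langle x|\otimes|\chi_x\rangle\langle\chi_x|\otimes\sum_jp(j|x)|j\rangle\langle j|$, with $S(A:C)=S(A)+S(C)-S(AC)$ and $S(A:B|C)=S(AC)+S(BC)-S(ABC)-S(C)$ (von Neumann entropies, base 2). Then $M(\mathcal G,R)=\inf\{S(A:B|C):S(A:C)\le R\}$ over all finite $\mathcal J$ and conditional distributions. *)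

From HB Require Import structures.
From mathcomp Require Import all_boot all_order all_algebra.
From mathcomp Require Import all_classical all_reals.
From mathcomp Require Import constructive_ereal ereal exp.
From mathcomp Require Import complex.
Set Implicit Arguments. Unset Strict Implicit. Unset Printing Implicit Defensive.
Import Order.TTheory GRing.Theory Num.Theory.
Local Open Scope ring_scope.
Local Open Scope complex_scope.

Section Q.
Variable R : realType.
Local Notation C := R[i].

Definition op (T : finType) := T -> T -> C.

Definition unitary (T : finType) (U : op T) : Prop :=
  forall i j, \sum_k U i k * (U j k)^* = (i == j)%:R.

Definition spectral (T : finType) (rho : op T) (lam : T -> R) : Prop :=
  exists U : op T, unitary U /\
    forall i j, rho i j = \sum_k U i k * (lam k)%:C * (U j k)^*.

Definition log2 (x : R) : R := ln x / ln 2.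
Definition eta (x : R) : R := if 0 < x then - (x * log2 x) else 0.

Definition shannon (T : finType) (lam : T -> R) : R := \sum_k eta (lam k).

(* von Neumann entropy S(rho) = - tr (rho log2 rho), computed from a spectral
   decomposition rho = U diag(lam) U^* (U unitary); the eigenvalue list lam is
   determined up to permutation, so the value does not depend on the choice.
   (Junk value 0 for operators without such a decomposition, never used.) *)
Definition vN_entropy (T : finType) (rho : op T) : R :=
  match pselect (exists lam, spectral rho lam) with
  | left H => shannon (projT1 (cid H))
  | right _ => 0
  end.

Definition ptrace2 (T1 T2 : finType) (rho : op (T1 * T2)%type) : op T1 :=
  fun a a' => \sum_b rho (a, b) (a', b).
Definition ptrace1 (T1 T2 : finType) (rho : op (T1 * T2)%type) : op T2 :=
  fun b b' => \sum_a rho (a, b) (a, b').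

Definition prob_dist (T : finType) (p : T -> R) : Prop :=
  (forall t, 0 <= p t) /\ \sum_t p t = 1.

Definition cond_dist (X J : finType) (p : X -> J -> R) : Prop :=
  forall x, prob_dist (p x).

Definition unit_vector (d : nat) (v : 'I_d -> C) : Prop :=
  \sum_b v b * (v b)^* = 1.

Section CQC.
Variables (d : nat) (X J : finType) (s : X -> R) (chi : X -> 'I_d -> C)
  (p : X -> J -> R).

(* rho^{ABC} = sum_x s_x |x><x| (x) |chi_x><chi_x| (x) sum_j p(j|x) |j><j|,
   on the space A (x) B (x) C = C^X (x) C^d (x) C^J *)
Definition rhoABC : op ((X * 'I_d) * J)%type :=
  fun u v => if (u.1.1 == v.1.1) && (u.2 == v.2)
             then (s u.1.1 * p u.1.1 u.2)%:C * chi u.1.1 u.1.2 * (chi u.1.1 v.1.2)^*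
             else 0.

Definition rhoAC : op (X * J)%type :=
  fun u v => \sum_b rhoABC ((u.1, b), u.2) ((v.1, b), v.2).
Definition rhoBC : op ('I_d * J)%type :=
  fun u v => \sum_x rhoABC ((x, u.1), u.2) ((x, v.1), v.2).
Definition rhoA : op X := ptrace2 (ptrace2 rhoABC).
Definition rhoC : op J := ptrace1 rhoABC.

Definition mutinf_AC : R :=
  vN_entropy rhoA + vN_entropy rhoC - vN_entropy rhoAC.
Definition cmi_AB_C : R :=
  vN_entropy rhoAC + vN_entropy rhoBC - vN_entropy rhoABC - vN_entropy rhoC.
End CQC.

Definition M_fun (d : nat) (X : finType) (s : X -> R) (chi : X -> 'I_d -> C)
    (r : R) : \bar R :=
  ereal_inf [set z : \bar R | exists (J : finType) (p : X -> J -> R),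
    [/\ cond_dist p, mutinf_AC s chi p <= r & z = (cmi_AB_C s chi p)%:E]].

End Q.

From Pilot Require Import Defs.
From HB Require Import structures.
From mathcomp Require Import all_boot all_order all_algebra.
From mathcomp Require Import all_classical all_reals.
From mathcomp Require Import constructive_ereal ereal exp.
From mathcomp Require Import complex spectral sesquilinear.
From mathcomp Require Import ring lra.
Import Order.TTheory GRing.Theory Num.Theory.
Local Open Scope complex_scope.
Local Open Scope ring_scope.
Set Implicit Arguments. Unset Strict Implicit. Unset Printing Implicit Defensive.

(* Given a strategy [p(j|i,k)] for the rotated ensemble F, let E use the strategy
   [p(j,k|i) = a_k p(j|i,k)], which records the label k of the unitary in the
   register C. For classical-quantum states with pure branches,
   S(A:C) = H(A) + H(C) - H(AC) and S(A:B|C) = S(BC) - S(C). The constraint is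
   preserved since the joint distributions agree, H(IK) = H(I) + H(K) and
   H(JK) <= H(J) + H(K). For the objective, S(B|JK) of E equals S(B|JK) of the
   state of F extended by the register K, because U_k acts inside the branch
   labelled k, and forgetting K cannot decrease the conditional entropy:
   S(B|JK) <= S(B|J).
   Von Neumann entropies are computed from spectral decompositions; the value is
   independent of the decomposition, and bounded by the entropy of the diagonal
   in any orthonormal basis, because Shannon entropy increases under doubly
   stochastic maps. *)

Lemma sum_delta (S : pzSemiRingType) (T : finType) (F : T -> S) (i : T) :
  \sum_j (i == j)%:R * F j = F i.
Proof.
rewrite (bigD1 i) //= eqxx mul1r big1 ?addr0 // => j.
by rewrite eq_sym => /negbTE ->; rewrite mul0r.
Qed.

Lemma sum_pair (V : nmodType) (A B : finType) (F : A * B -> V) :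
  \sum_u F u = \sum_a \sum_b F (a, b).
Proof. by rewrite pair_big; apply: eq_bigr => -[]. Qed.

Section Operators.
Variable R : realType.
Local Notation C := R[i].

Definition sqnorm (z : C) : R := complex.Re z ^+ 2 + complex.Im z ^+ 2.

Lemma sqnormE (z : C) : z * z^* = (sqnorm z)%:C.
Proof.
case: z => a b; apply/eqP; rewrite eq_complex /sqnorm /=.
by apply/andP; split; apply/eqP; ring.
Qed.

Lemma sqnorm_ge0 (z : C) : 0 <= sqnorm z.
Proof. by rewrite addr_ge0 ?sqr_ge0. Qed.

Lemma sqnormJ (z : C) : sqnorm z^* = sqnorm z.
Proof. by case: z => a b; rewrite /sqnorm /= sqrrN. Qed.

Lemma conjC_real_complex (x : R) : (x%:C)^* = x%:C :> C.
Proof. exact: conjc_real. Qed.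

Lemma sqnorm_bool (b : bool) : sqnorm b%:R = b%:R.
Proof. by case: b; rewrite /sqnorm /= ?expr0n /= ?addr0 ?expr1n. Qed.

Lemma sum_mulcJ (T : finType) (v : T -> C) :
  \sum_i v i * (v i)^* = (\sum_i sqnorm (v i))%:C.
Proof. by rewrite rmorph_sum; apply: eq_bigr => i _; rewrite sqnormE. Qed.

Lemma unit_vectorE (d : nat) (v : 'I_d -> C) :
  unit_vector v <-> \sum_i sqnorm (v i) = 1.
Proof. by rewrite /unit_vector sum_mulcJ; split=> [/complexI|->]. Qed.

Definition dotc (T : finType) (u v : T -> C) : C := \sum_i (u i)^* * v i.

Lemma sqnorm_dotcC (T : finType) (u v : T -> C) :
  sqnorm (dotc u v) = sqnorm (dotc v u).
Proof.
rewrite -sqnormJ /dotc rmorph_sum; congr sqnorm; apply: eq_bigr => i _.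
by rewrite rmorphM /= conjCK mulrC.
Qed.

Definition apply_op (T : finType) (A : op R T) (v : T -> C) : T -> C :=
  fun i => \sum_j A i j * v j.

Section Unitary.
Variable T : finType.
Implicit Types (U V W : op R T) (v : T -> C).

Lemma unitary1 : unitary (fun i j : T => (i == j)%:R : C).
Proof.
move=> i j; under eq_bigr do rewrite rmorph_nat.
by rewrite sum_delta eq_sym.
Qed.

(* A right inverse of a square matrix is a left inverse. *)
Lemma unitary_cols U : unitary U -> forall i j, dotc (U^~ i) (U^~ j) = (i == j)%:R.
Proof.
move=> hU i j.
pose n := #|T|; pose e : 'I_n -> T := enum_val.
have sumE (f : T -> C) : \sum_k f k = \sum_(a < n) f (e a).
  by rewrite (reindex e) //; apply: onW_bij; exact: enum_val_bij.
pose M : 'M[C]_n := \matrix_(a, b) U (e a) (e b).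
pose B : 'M[C]_n := \matrix_(a, b) (U (e b) (e a))^*.
have MB : M *m B = 1%:M.
  apply/matrixP => a b; rewrite !mxE -(inj_eq (@enum_val_inj _ _)) -hU sumE.
  by apply: eq_bigr => k _; rewrite !mxE.
have /matrixP/(_ (enum_rank i) (enum_rank j)) := mulmx1C MB.
rewrite !mxE (inj_eq enum_rank_inj) => <-; rewrite /dotc sumE.
by apply: eq_bigr => k _; rewrite !mxE /e !enum_rankK.
Qed.

Lemma unitary_mul U V :
  unitary U -> unitary V -> unitary (fun i k => \sum_c U i c * V c k).
Proof.
move=> hU hV i j.
transitivity (\sum_c \sum_c' U i c * (U j c')^* * \sum_k V c k * (V c' k)^*).
  under eq_bigr do rewrite rmorph_sum mulr_suml.
  under eq_bigr do under eq_bigr do rewrite mulr_sumr.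
  rewrite exchange_big; apply: eq_bigr => c _.
  rewrite exchange_big; apply: eq_bigr => c' _.
  rewrite mulr_sumr; apply: eq_bigr => k _; rewrite rmorphM /=; ring.
under eq_bigr do under eq_bigr do rewrite hV mulrC.
under eq_bigr do rewrite sum_delta.
exact: hU.
Qed.

Lemma parseval W v : unitary W ->
  \sum_k sqnorm (dotc v (W^~ k)) = \sum_i sqnorm (v i).
Proof.
move=> hW; apply: complexI; rewrite !rmorph_sum /=.
transitivity (\sum_i \sum_j (v i)^* * v j * \sum_k W i k * (W j k)^*).
  under eq_bigr do rewrite -sqnormE /dotc rmorph_sum mulr_suml.
  rewrite exchange_big; apply: eq_bigr => i _.
  under eq_bigr do rewrite mulr_sumr.
  rewrite exchange_big; apply: eq_bigr => j _.
  rewrite mulr_sumr; apply: eq_bigr => k _; rewrite !rmorphM /= conjCK; ring.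
apply: eq_bigr => i _; under eq_bigr do rewrite hW mulrC.
by rewrite sum_delta mulrC sqnormE.
Qed.

Lemma unitary_col_sqnorm W a : unitary W -> \sum_i sqnorm (W i a) = 1.
Proof.
move=> /unitary_cols /(_ a a); rewrite eqxx /dotc => h.
apply: complexI; rewrite rmorph_sum /= -[RHS]h.
by apply: eq_bigr => i _; rewrite mulrC sqnormE.
Qed.

End Unitary.

Lemma unit_vector_apply (d : nat) (U : op R 'I_d) (v : 'I_d -> C) :
  unitary U -> unit_vector v -> unit_vector (apply_op U v).
Proof.
move=> hU /unit_vectorE hv; apply/unit_vectorE; rewrite -hv.
have hU' : unitary (fun c b => (U b c)^*).
  move=> c c'; rewrite -(unitary_cols hU c c'); apply: eq_bigr => b _.
  by rewrite conjCK mulrC.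
rewrite -(parseval v hU'); apply: eq_bigr => b _.
rewrite -sqnormJ /apply_op /dotc rmorph_sum; congr sqnorm.
by apply: eq_bigr => c _; rewrite rmorphM /= mulrC.
Qed.
End Operators.

Section ShannonInequalities.
Variable R : realType.

Lemma eta0 : Defs.eta (0 : R) = 0.
Proof. by rewrite /Defs.eta ltxx. Qed.

Lemma eta1 : Defs.eta (1 : R) = 0.
Proof. by rewrite /Defs.eta ltr01 /log2 ln1 mul0r mulr0 oppr0. Qed.

Lemma ln2_gt0 : 0 < ln (2 : R).
Proof. by rewrite ln_gt0 // ltr1n. Qed.

Lemma etaE (x : R) : 0 <= x -> Defs.eta x = - (x * ln x) / ln 2.
Proof.
rewrite le_eqVlt => /predU1P [<-|x_gt0]; first by rewrite eta0 mul0r oppr0 mul0r.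
by rewrite /Defs.eta x_gt0 /log2 mulrA mulNr.
Qed.

Lemma shannonE (T : finType) (f : T -> R) : (forall t, 0 <= f t) ->
  shannon f = - (\sum_t f t * ln (f t)) / ln 2.
Proof.
move=> f_ge0; rewrite /shannon (eq_bigr _ (fun t _ => etaE (f_ge0 t))).
by rewrite -mulr_suml sumrN.
Qed.

(* The tangent line of [x ln x] at [m]. *)
Lemma xlnx_ge_tangent (x m : R) : 0 <= x -> 0 <= m -> (0 < x -> 0 < m) ->
  x * ln m + x - m <= x * ln x.
Proof.
rewrite le_eqVlt => /predU1P [<-|x_gt0] m_ge0 xm; first by rewrite !mul0r; lra.
have m_gt0 := xm x_gt0.
have lnmx : ln (m / x) <= m / x - 1.
  by have := @le_ln1Dx _ (m / x - 1); rewrite subrKC; apply; have := divr_gt0 m_gt0 x_gt0; lra.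
have := ler_wpM2l (ltW x_gt0) lnmx.
by rewrite ln_div ?posrE // !mulrBr mulr1 mulrCA divff ?mulr1 ?gt_eqF //; lra.
Qed.

Lemma xlnx_jensen (K : finType) (w y : K -> R) :
  (forall k, 0 <= w k) -> (forall k, 0 <= y k) -> \sum_k w k = 1 ->
  (\sum_k w k * y k) * ln (\sum_k w k * y k) <= \sum_k w k * (y k * ln (y k)).
Proof.
move=> w_ge0 y_ge0 w1; set m := \sum_k w k * y k.
have m_ge0 : 0 <= m by apply: sumr_ge0 => k _; exact: mulr_ge0.
have -> : m * ln m = \sum_k w k * (y k * ln m + y k - m).
  rewrite (eq_bigr (fun k => w k * y k * ln m + w k * y k - w k * m)); last first.
    by move=> k _; ring.
  by rewrite sumrB big_split /= -!mulr_suml w1 mul1r -/m; ring.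
apply: ler_sum => k _; have [->|wk_neq0] := eqVneq (w k) 0; first by rewrite !mul0r.
apply: ler_wpM2l => //; apply: xlnx_ge_tangent => // yk_gt0.
have wk_gt0 : 0 < w k by rewrite lt_def wk_neq0 w_ge0.
rewrite /m (bigD1 k) //=; apply: ltr_pwDl; first exact: mulr_gt0.
by apply: sumr_ge0 => j _; exact: mulr_ge0.
Qed.

Lemma shannon_le_bistochastic (A K : finType) (P : A -> K -> R) (lam : K -> R) :
  (forall a k, 0 <= P a k) -> (forall k, 0 <= lam k) ->
  (forall a, \sum_k P a k = 1) -> (forall k, \sum_a P a k = 1) ->
  shannon lam <= shannon (fun a => \sum_k P a k * lam k).
Proof.
move=> P_ge0 lam_ge0 rows cols.
rewrite !shannonE // => [|a]; last by apply: sumr_ge0 => k _; exact: mulr_ge0.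
rewrite ler_pM2r ?invr_gt0 ?ln2_gt0 // lerN2.
apply: (le_trans (ler_sum _ (fun a _ => xlnx_jensen (P_ge0 a) lam_ge0 (rows a)))).
by rewrite exchange_big /=; under eq_bigr do rewrite -mulr_suml cols mul1r.
Qed.

Lemma xlnx_log_sum (d r c t : R) : 0 <= d -> d <= r -> d <= c -> r <= t ->
  d * ln r + d * ln c - d * ln t + d - r * c / t <= d * ln d.
Proof.
move=> d_ge0 dr dc rt.
have r_ge0 := le_trans d_ge0 dr; have c_ge0 := le_trans d_ge0 dc.
have t_ge0 := le_trans r_ge0 rt.
have [d0|d_neq0] := eqVneq d 0.
  by have := divr_ge0 (mulr_ge0 r_ge0 c_ge0) t_ge0; rewrite d0 !mul0r; lra.
have d_gt0 : 0 < d by rewrite lt_def d_neq0 d_ge0.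
have r_gt0 := lt_le_trans d_gt0 dr; have c_gt0 := lt_le_trans d_gt0 dc.
have t_gt0 := lt_le_trans r_gt0 rt.
have rct_gt0 : 0 < r * c / t by rewrite divr_gt0 ?mulr_gt0.
have := xlnx_ge_tangent d_ge0 (ltW rct_gt0) (fun _ => rct_gt0).
by rewrite ln_div ?lnM ?posrE ?mulr_gt0 //; lra.
Qed.

(* Sum of the tangent inequalities at [m = r_a c_b / t]: Gibbs' inequality for
   [D] against the product of its marginals. *)
Lemma xlnx_subadd (A B : finType) (D : A -> B -> R) : (forall a b, 0 <= D a b) ->
  \sum_a (\sum_b D a b) * ln (\sum_b D a b) + \sum_b (\sum_a D a b) * ln (\sum_a D a b)
  <= \sum_a \sum_b D a b * ln (D a b) + (\sum_a \sum_b D a b) * ln (\sum_a \sum_b D a b).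
Proof.
move=> D_ge0.
pose r a := \sum_b D a b; pose c b := \sum_a D a b; pose t := \sum_a r a.
change (\sum_a r a * ln (r a) + \sum_b c b * ln (c b) <=
  \sum_a \sum_b D a b * ln (D a b) + t * ln t).
have le_sum (T : finType) (f : T -> R) t0 : (forall t, 0 <= f t) -> f t0 <= \sum_t f t.
  by move=> f_ge0; rewrite (bigD1 t0) //= lerDl sumr_ge0.
have r_ge0 a : 0 <= r a by exact: sumr_ge0.
have log_sum : \sum_a \sum_b (D a b * ln (r a) + D a b * ln (c b) - D a b * ln t
    + D a b - r a * c b / t) <= \sum_a \sum_b D a b * ln (D a b).
  apply: ler_sum => a _; apply: ler_sum => b _; apply: xlnx_log_sum => //.
  - exact: (le_sum _ (D a)).
  - exact: (le_sum _ (D^~ b)).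
  - exact: (le_sum _ r).
have sum_rc : \sum_a \sum_b r a * c b / t = t.
  transitivity ((\sum_a r a) * (\sum_b c b) / t).
    by rewrite !mulr_suml; apply: eq_bigr => a _; rewrite mulr_sumr mulr_suml.
  have -> : \sum_b c b = t by rewrite exchange_big.
  have -> : \sum_a r a = t by [].
  by have [t0|t_neq0] := eqVneq t 0; [rewrite t0 !mul0r | rewrite mulfK].
have E1 : \sum_a \sum_b D a b * ln (r a) = \sum_a r a * ln (r a).
  by apply: eq_bigr => a _; rewrite -mulr_suml.
have E2 : \sum_a \sum_b D a b * ln (c b) = \sum_b c b * ln (c b).
  by rewrite exchange_big; apply: eq_bigr => b _; rewrite -mulr_suml.
have E3 : \sum_a \sum_b D a b * ln t = t * ln t.
  by rewrite mulr_suml; apply: eq_bigr => a _; rewrite -mulr_suml.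
move: log_sum; under eq_bigr do rewrite !(sumrB, big_split) /=.
rewrite !(sumrB, big_split) /= E1 E2 E3 sum_rc -/t; lra.
Qed.

Lemma shannon_subadd (A B : finType) (D : A -> B -> R) : (forall a b, 0 <= D a b) ->
  \sum_a shannon (D a) + Defs.eta (\sum_a \sum_b D a b) <=
  shannon (fun a => \sum_b D a b) + shannon (fun b => \sum_a D a b).
Proof.
move=> D_ge0; have := xlnx_subadd D_ge0.
have t_ge0 : 0 <= \sum_a \sum_b D a b by do 2!apply: sumr_ge0 => ? _.
rewrite (eq_bigr _ (fun a _ => shannonE (D_ge0 a))) -mulr_suml sumrN etaE //.
rewrite !shannonE // => [|b|a]; try by apply: sumr_ge0.
rewrite -!mulrDl ler_pM2r ?invr_gt0 ?ln2_gt0 //; lra.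
Qed.

Lemma shannon_pair (A B : finType) (f : A -> B -> R) :
  shannon (fun u : A * B => f u.1 u.2) = \sum_a shannon (f a).
Proof. by rewrite /shannon pair_big. Qed.

Lemma eta_mul (x y : R) : 0 <= x -> 0 <= y ->
  Defs.eta (x * y) = y * Defs.eta x + x * Defs.eta y.
Proof.
move=> x_ge0 y_ge0; rewrite !etaE ?mulr_ge0 //.
have [->|x_neq0] := eqVneq x 0; first by rewrite !(mul0r, mulr0, oppr0, addr0).
have [->|y_neq0] := eqVneq y 0; first by rewrite !(mul0r, mulr0, oppr0, add0r).
rewrite lnM ?posrE ?lt_def ?x_neq0 ?y_neq0 //; ring.
Qed.

Lemma shannon_prod (A B : finType) (p : A -> R) (a : B -> R) :
  prob_dist p -> prob_dist a ->
  shannon (fun u : A * B => p u.1 * a u.2) = shannon p + shannon a.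
Proof.
move=> [p_ge0 p1] [a_ge0 a1]; rewrite (shannon_pair (fun i k => p i * a k)).
transitivity (\sum_i (Defs.eta (p i) + p i * shannon a)); last first.
  by rewrite big_split /= -mulr_suml p1 mul1r.
apply: eq_bigr => i _; rewrite /shannon; under eq_bigr do rewrite eta_mul //.
by rewrite big_split /= -mulr_suml a1 mul1r -mulr_sumr.
Qed.

End ShannonInequalities.

Section VonNeumann.
Variable R : realType.
Local Notation C := R[i].

Definition mixture (X T : finType) (w : X -> R) (v : X -> T -> C) : op R T :=
  fun i j => \sum_x v x i * (w x)%:C * (v x j)^*.

Definition psd (T : finType) (rho : op R T) : Prop :=
  exists W lam, [/\ unitary W, forall k, 0 <= lam k & rho = mixture lam (fun k => W^~ k)].

Definition diag_in (T : finType) (rho V : op R T) (a : T) : C :=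
  \sum_i \sum_j (V i a)^* * rho i j * V j a.

Lemma spectral_mixtureP (T : finType) (rho : op R T) (lam : T -> R) :
  spectral rho lam <-> exists2 W, unitary W & rho = mixture lam (fun k => W^~ k).
Proof.
split=> [[W [hW rhoE]]|[W hW ->]]; last by exists W.
by exists W => //; apply/funext => i; apply/funext => j; rewrite rhoE.
Qed.

Lemma diag_in_mixture (X T : finType) (w : X -> R) (v : X -> T -> C) (V : op R T) a :
  diag_in (mixture w v) V a = (\sum_x w x * sqnorm (dotc (V^~ a) (v x)))%:C.
Proof.
rewrite rmorph_sum /diag_in /mixture.
transitivity (\sum_i \sum_j \sum_x (V i a)^* * v x i * (V j a * (v x j)^*) * (w x)%:C).
  apply: eq_bigr => i _; apply: eq_bigr => j _; rewrite mulr_sumr mulr_suml.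
  by apply: eq_bigr => x _; ring.
under eq_bigr do rewrite exchange_big /=.
rewrite exchange_big /=.
apply: eq_bigr => x _; rewrite rmorphM /= -sqnormE /dotc [RHS]mulrC rmorph_sum /=.
rewrite mulr_suml mulr_suml; apply: eq_bigr => i _.
rewrite mulr_sumr mulr_suml; apply: eq_bigr => j _.
by rewrite rmorphM /= conjCK; ring.
Qed.

Lemma diag_in_eigen (T : finType) (W : op R T) (lam : T -> R) a : unitary W ->
  diag_in (mixture lam (fun k => W^~ k)) W a = (lam a)%:C.
Proof.
move=> hW; rewrite diag_in_mixture; congr _%:C.
by under eq_bigr do rewrite unitary_cols // sqnorm_bool mulrC; rewrite sum_delta.
Qed.

Lemma shannon_le_diag_in (T : finType) (V W : op R T) (lam : T -> R) :
  unitary V -> unitary W -> (forall k, 0 <= lam k) ->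
  shannon lam <= shannon (fun a => \sum_k sqnorm (dotc (V^~ a) (W^~ k)) * lam k).
Proof.
move=> hV hW lam_ge0; apply: shannon_le_bistochastic => // [a k|a|k].
- exact: sqnorm_ge0.
- by rewrite parseval // unitary_col_sqnorm.
- by under eq_bigr do rewrite sqnorm_dotcC; rewrite parseval // unitary_col_sqnorm.
Qed.

Lemma vN_entropy_spectral (T : finType) (W : op R T) (lam : T -> R) :
  unitary W -> (forall k, 0 <= lam k) ->
  vN_entropy (mixture lam (fun k => W^~ k)) = shannon lam.
Proof.
move=> hW lam_ge0; rewrite /vN_entropy; case: pselect => [H|[]]; last first.
  by exists lam; apply/spectral_mixtureP; exists W.
case: (cid H) => mu /spectral_mixtureP [V hV mixE] /=.
have muE a : mu a = \sum_k sqnorm (dotc (V^~ a) (W^~ k)) * lam k.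
  apply: complexI; rewrite -(@diag_in_eigen _ V mu a hV) -mixE diag_in_mixture.
  by under eq_bigr do rewrite mulrC.
have lamE k : lam k = \sum_a sqnorm (dotc (W^~ k) (V^~ a)) * mu a.
  apply: complexI; rewrite -(@diag_in_eigen _ W lam k hW) mixE diag_in_mixture.
  by under eq_bigr do rewrite mulrC.
have mu_ge0 a : 0 <= mu a.
  by rewrite muE; apply: sumr_ge0 => k _; rewrite mulr_ge0 ?sqnorm_ge0.
apply/eqP; rewrite eq_le; apply/andP; split.
- by rewrite (funext lamE); exact: shannon_le_diag_in.
- by rewrite (funext muE); exact: shannon_le_diag_in.
Qed.

Lemma vN_entropy_le_diag (T : finType) (rho V : op R T) (e : T -> R) :
  psd rho -> unitary V -> (forall a, diag_in rho V a = (e a)%:C) ->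
  vN_entropy rho <= shannon e.
Proof.
move=> [W [lam [hW lam_ge0 ->]]] hV rhoV.
have -> : e = fun a => \sum_k sqnorm (dotc (V^~ a) (W^~ k)) * lam k.
  apply/funext => a; apply: complexI; rewrite -rhoV diag_in_mixture.
  by under eq_bigr do rewrite mulrC.
by rewrite vN_entropy_spectral //; exact: shannon_le_diag_in.
Qed.

Lemma vN_entropy_diag (T : finType) (rho : op R T) (f : T -> R) :
  (forall t, 0 <= f t) -> (forall i j, rho i j = if i == j then (f i)%:C else 0) ->
  vN_entropy rho = shannon f.
Proof.
move=> f_ge0 rhoE.
have -> : rho = mixture f (fun k i => (i == k)%:R).
  apply/funext => i; apply/funext => j; rewrite rhoE /mixture.
  under eq_bigr do rewrite rmorph_nat mulrC.
  by rewrite sum_delta; case: eqVneq => [->|]; rewrite ?mul1r ?mul0r.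
exact: (@vN_entropy_spectral T (fun i k => (i == k)%:R) f (@unitary1 _ T) f_ge0).
Qed.

End VonNeumann.

Section SpectralTheorem.
Local Open Scope sesquilinear_scope.
Variable R : realType.
Local Notation C := R[i].

Lemma hermitian_spectral (d : nat) (A : op R 'I_d) :
  (forall i j, A j i = (A i j)^*) ->
  exists W lam, unitary W /\ A = mixture lam (fun k => W^~ k).
Proof.
move=> hA.
pose M : 'M[C]_d := \matrix_(i, j) A i j.
have hM : M \is hermsymmx.
  by apply/is_hermitianmxP; rewrite expr0 scale1r; apply/matrixP => i j; rewrite !mxE hA.
have := orthomx_spectralP (hermitian_normalmx hM).
set P := spectralmx M; set D := spectral_diag M.
have hP : P \is unitarymx by exact: spectral_unitarymx.
rewrite invmx_unitary // => ME.
have PP : P^t* *m P = 1%:M by apply: mulmx1C; apply/unitarymxP.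
have D_real k : D 0 k = (complex.Re (D 0 k))%:C.
  rewrite RRe_real //.
  by have /mxOverP := hermitian_spectral_diag_real hM; apply.
exists (fun i k => (P k i)^*), (fun k => complex.Re (D 0 k)); split.
  move=> i j; have /matrixP/(_ i j) := PP; rewrite !mxE => <-.
  by apply: eq_bigr => k _; rewrite !mxE conjCK.
apply/funext => i; apply/funext => j.
have /matrixP/(_ i j) := ME; rewrite mul_mx_diag !mxE => ->.
by apply: eq_bigr => k _; rewrite !mxE -D_real conjCK.
Qed.

(* Gram-Schmidt applied to the matrix whose first row is [v] and whose other
   rows vanish yields a unitary matrix whose first row is [v] up to a phase. *)
Lemma unit_vector_completion (d : nat) (v : 'I_d -> C) : unit_vector v ->
  exists V o, unitary V /\ forall b b', V b o * (V b' o)^* = v b * (v b')^*.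
Proof.
case: d v => [v|n v hv]; first by rewrite /unit_vector big_ord0 => /eqP; rewrite eq_sym oner_eq0.
pose A : 'M[C]_n.+1 := \matrix_(i, j) (if i == ord0 then v j else 0).
set B := schmidt A.
have hB : B \is unitarymx by exact: schmidt_unitarymx.
have BB : B^t* *m B = 1%:M by apply: mulmx1C; apply/unitarymxP.
have := row_schmidt_sub A ord0.
rewrite (big_pred1 ord0) ?genmxE; last by move=> k; rewrite /= leqn0.
move=> /sub_rVP [c vE]; have {}vE k : v k = c * B ord0 k.
  by have /matrixP/(_ 0 k) := vE; rewrite !mxE eqxx.
have B0 : \sum_k B ord0 k * (B ord0 k)^* = 1.
  have /matrixP/(_ ord0 ord0) := unitarymxP hB; rewrite !mxE eqxx mulr1n => <-.
  by apply: eq_bigr => k _; rewrite !mxE.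
have cc : c * c^* = 1.
  rewrite -hv -[LHS]mulr1 -B0 mulr_sumr; apply: eq_bigr => k _.
  by rewrite !vE rmorphM; ring.
exists (fun i k => B k i), ord0; split => [i j|b b'].
  have /matrixP/(_ i j) := BB; rewrite !mxE => /(congr1 Num.conj).
  rewrite rmorph_sum rmorph_nat => <-.
  by apply: eq_bigr => k _; rewrite !mxE rmorphM /= conjCK.
by rewrite !vE rmorphM -[LHS]mul1r -cc; ring.
Qed.

End SpectralTheorem.

Section Mixtures.
Variable R : realType.
Local Notation C := R[i].

Lemma mixture_hermitian (X T : finType) (w : X -> R) (v : X -> T -> C) i j :
  mixture w v j i = (mixture w v i j)^*.
Proof.
rewrite /mixture rmorph_sum; apply: eq_bigr => x _.
by rewrite !rmorphM /= conjCK conjC_real_complex; ring.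
Qed.

Lemma psd_mixture (d : nat) (X : finType) (w : X -> R) (v : X -> 'I_d -> C) :
  (forall x, 0 <= w x) -> psd (mixture w v).
Proof.
move=> w_ge0; have [W [lam [hW mixE]]] := hermitian_spectral (mixture_hermitian w v).
exists W, lam; split=> // k.
have := diag_in_eigen lam k hW; rewrite -mixE diag_in_mixture => /complexI <-.
by apply: sumr_ge0 => x _; rewrite mulr_ge0 ?sqnorm_ge0.
Qed.

Lemma rank1_spectral (d : nat) (v : 'I_d -> C) : unit_vector v ->
  exists V o, unitary V /\ forall c : R,
    mixture (fun _ : unit => c) (fun _ => v) =
    mixture (fun k => if k == o then c else 0) (fun k => V^~ k).
Proof.
move=> /unit_vector_completion [V [o [hV vV]]]; exists V, o; split => // c.
apply/funext => b; apply/funext => b'; rewrite /mixture (big_pred1 tt) // (bigD1 o) //=.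
rewrite eqxx big1 => [|k /negbTE ->]; last by rewrite mulr0 mul0r.
by rewrite addr0 mulrAC -vV mulrAC.
Qed.

Lemma vN_entropy_rank1 (d : nat) (v : 'I_d -> C) (c : R) :
  unit_vector v -> 0 <= c ->
  vN_entropy (mixture (fun _ : unit => c) (fun _ => v)) = Defs.eta c.
Proof.
move=> /rank1_spectral [V [o [hV ->]]] c_ge0.
rewrite vN_entropy_spectral // => [|k]; last by case: eqP.
rewrite /shannon (bigD1 o) //= eqxx big1 ?addr0 // => k /negbTE ->.
exact: eta0.
Qed.

Lemma mixture_apply (X T : finType) (w : X -> R) (v : X -> T -> C) (U : op R T) i j :
  mixture w (fun x => apply_op U (v x)) i j =
  \sum_c \sum_c' U i c * mixture w v c c' * (U j c')^*.
Proof.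
rewrite /mixture /apply_op.
transitivity (\sum_x \sum_c \sum_c' U i c * (v x c * (w x)%:C * (v x c')^*) * (U j c')^*).
  apply: eq_bigr => x _; rewrite rmorph_sum mulr_suml mulr_suml.
  apply: eq_bigr => c _; rewrite mulr_sumr; apply: eq_bigr => c' _.
  by rewrite rmorphM /=; ring.
rewrite exchange_big; apply: eq_bigr => c _; rewrite exchange_big; apply: eq_bigr => c' _.
by rewrite mulr_sumr mulr_suml.
Qed.

Lemma vN_entropy_apply_unitary (d : nat) (X : finType) (w : X -> R)
    (v : X -> 'I_d -> C) (U : op R 'I_d) :
  unitary U -> (forall x, 0 <= w x) ->
  vN_entropy (mixture w (fun x => apply_op U (v x))) = vN_entropy (mixture w v).
Proof.
move=> hU w_ge0; have [W [lam [hW lam_ge0 mixE]]] := psd_mixture v w_ge0.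
have -> : mixture w (fun x => apply_op U (v x)) =
    mixture lam (fun k => (fun i k => \sum_c U i c * W c k)^~ k).
  by apply/funext => i; apply/funext => j; rewrite mixture_apply mixE -mixture_apply.
by rewrite mixE !vN_entropy_spectral //; exact: unitary_mul.
Qed.

End Mixtures.

Section Conditioning.
Variable R : realType.
Local Notation C := R[i].

(* [S(B|K) <= S(B)] for the state [sum_k |k><k| (x) sigma_k]. *)
Lemma vN_entropy_mixture_cond_le (d : nat) (X K : finType) (w : X -> K -> R)
    (v : X -> K -> 'I_d -> C) :
  (forall x k, 0 <= w x k) -> (forall x k, unit_vector (v x k)) ->
  \sum_k (vN_entropy (mixture (w^~ k) (v^~ k)) - Defs.eta (\sum_x w x k)) <=
  vN_entropy (mixture (fun u : X * K => w u.1 u.2) (fun u => v u.1 u.2))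
    - Defs.eta (\sum_x \sum_k w x k).
Proof.
move=> w_ge0 v_unit.
have [W [lam [hW lam_ge0 mixE]]] :=
  psd_mixture (fun u : X * K => v u.1 u.2) (fun u => w_ge0 u.1 u.2).
pose e k b := \sum_x w x k * sqnorm (dotc (W^~ b) (v x k)).
have e_ge0 k b : 0 <= e k b.
  by apply: sumr_ge0 => x _; rewrite mulr_ge0 ?sqnorm_ge0.
have cond_le k : vN_entropy (mixture (w^~ k) (v^~ k)) <= shannon (e k).
  apply: (vN_entropy_le_diag (psd_mixture _ (w_ge0^~ k)) hW) => b.
  exact: diag_in_mixture.
have lamE b : lam b = \sum_k e k b.
  apply: complexI; rewrite -(diag_in_eigen lam b hW) -mixE diag_in_mixture.
  by congr _%:C; rewrite /e exchange_big /= pair_big.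
have e_sum k : \sum_b e k b = \sum_x w x k.
  rewrite exchange_big; apply: eq_bigr => x _; rewrite -mulr_sumr.
  under eq_bigr do rewrite sqnorm_dotcC.
  by rewrite parseval // (proj1 (unit_vectorE _) (v_unit x k)) mulr1.
have cond_sum : \sum_k vN_entropy (mixture (w^~ k) (v^~ k)) <= \sum_k shannon (e k).
  by apply: ler_sum => k _; exact: cond_le.
have := shannon_subadd e_ge0.
have -> : (fun k => \sum_b e k b) = (fun k => \sum_x w x k) by apply/funext => k; exact: e_sum.
have -> : (fun b => \sum_k e k b) = lam by apply/funext => b; rewrite lamE.
have -> : \sum_k \sum_b e k b = \sum_x \sum_k w x k.
  by rewrite (eq_bigr _ (fun k _ => e_sum k)) exchange_big.
rewrite mixE vN_entropy_spectral // sumrB.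
have -> : \sum_k Defs.eta (\sum_x w x k) = shannon (fun k => \sum_x w x k) by [].
lra.
Qed.

End Conditioning.

Section BlockDiagonal.
Variables (R : realType) (T Y I : finType) (e : T * Y -> I) (g : I -> T * Y).
Hypotheses (eK : cancel e g) (gK : cancel g e).

Definition block_op (W : Y -> op R T) : op R I :=
  fun u u' => ((g u).2 == (g u').2)%:R * W (g u).2 (g u).1 (g u').1.

Lemma block_opE (W : Y -> op R T) t y t' y' :
  block_op W (e (t, y)) (e (t', y')) = (y == y')%:R * W y t t'.
Proof. by rewrite /block_op !eK. Qed.

Lemma sum_block (V : nmodType) (F : I -> V) : \sum_u F u = \sum_y \sum_t F (e (t, y)).
Proof.
rewrite (reindex e) /=; last by exists g => u _; rewrite ?eK ?gK.
by rewrite [RHS]exchange_big sum_pair.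
Qed.

Lemma can_ind2 (P : I -> I -> Prop) :
  (forall t y t' y', P (e (t, y)) (e (t', y'))) -> forall u u', P u u'.
Proof. by move=> Pe u u'; rewrite -(gK u) -(gK u'); case: (g u) (g u') => t y [t' y']. Qed.

Lemma unitary_block_op (W : Y -> op R T) :
  (forall y, unitary (W y)) -> unitary (block_op W).
Proof.
move=> hW; apply: can_ind2 => t y t' y'.
rewrite (inj_eq (can_inj eK)) xpair_eqE sum_block.
transitivity (\sum_y'' (y == y'')%:R * ((y' == y'')%:R *
    \sum_t'' W y t t'' * (W y' t' t'')^*)).
  apply: eq_bigr => y'' _; rewrite !mulr_sumr; apply: eq_bigr => t'' _.
  by rewrite !block_opE rmorphM rmorph_nat; ring.
rewrite sum_delta eq_sym; case: eqVneq => [->|_]; last by rewrite mul0r andbF.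
by rewrite hW andbT mul1r.
Qed.

Lemma block_op_mixture (W : Y -> op R T) (lam : Y -> T -> R) :
  mixture (fun u => lam (g u).2 (g u).1) (fun k => (block_op W)^~ k) =
  block_op (fun y => mixture (lam y) (fun k => (W y)^~ k)).
Proof.
apply/funext => u; apply/funext => u'; move: u u'; apply: can_ind2 => t y t' y'.
rewrite block_opE /mixture sum_block.
transitivity (\sum_y'' (y == y'')%:R * ((y' == y'')%:R *
    \sum_t'' W y t t'' * (lam y'' t'')%:C * (W y' t' t'')^*)).
  apply: eq_bigr => y'' _; rewrite !mulr_sumr; apply: eq_bigr => t'' _.
  by rewrite !block_opE eK rmorphM rmorph_nat; ring.
rewrite sum_delta eq_sym; case: eqVneq => [->|_]; last by rewrite !mul0r.
by rewrite !mul1r.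
Qed.

Lemma vN_entropy_block_diag (rho : op R I) (sig : Y -> op R T) :
  (forall y, psd (sig y)) -> rho = block_op sig ->
  vN_entropy rho = \sum_y vN_entropy (sig y).
Proof.
move=> /choice [W /choice [lam sigE]] ->.
have hW y : unitary (W y) by case: (sigE y).
have lam_ge0 y k : 0 <= lam y k by case: (sigE y).
have -> : sig = fun y => mixture (lam y) (fun k => (W y)^~ k).
  by apply/funext => y; case: (sigE y).
have blk_ge0 u : 0 <= lam (g u).2 (g u).1 by exact: lam_ge0.
rewrite -block_op_mixture (vN_entropy_spectral (unitary_block_op hW) blk_ge0).
rewrite /shannon sum_block; apply: eq_bigr => y _.
by rewrite vN_entropy_spectral //; apply: eq_bigr => t _; rewrite eK.
Qed.

End BlockDiagonal.

Section CQState.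
Variables (R : realType) (d : nat) (X J : finType).
Variables (s : X -> R) (chi : X -> 'I_d -> R[i]) (q : X -> J -> R).
Hypotheses (s_ge0 : forall x, 0 <= s x) (chi_unit : forall x, unit_vector (chi x))
  (q_dist : cond_dist q).

Let q_ge0 x j : 0 <= q x j. Proof. by case: (q_dist x). Qed.
Let q_sum1 x : \sum_j q x j = 1. Proof. by case: (q_dist x). Qed.
Let sq_ge0 x j : 0 <= s x * q x j. Proof. by rewrite mulr_ge0. Qed.

Let weighted_norm x j : \sum_b (s x * q x j)%:C * chi x b * (chi x b)^* = (s x * q x j)%:C.
Proof. by under eq_bigr do rewrite -mulrA; rewrite -mulr_sumr chi_unit mulr1. Qed.

Lemma vN_entropy_rhoA : vN_entropy (rhoA s chi q) = shannon s.
Proof.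
apply: vN_entropy_diag => // x x'; rewrite /rhoA /ptrace2 /rhoABC /=.
case: (eqVneq x x') => [_|_]; last by apply: big1 => b _; apply: big1.
rewrite exchange_big /=; under eq_bigr do under eq_bigr do rewrite !eqxx /=.
by under eq_bigr do rewrite weighted_norm; rewrite -rmorph_sum -mulr_sumr q_sum1 mulr1.
Qed.

Lemma vN_entropy_rhoC : vN_entropy (rhoC s chi q) = shannon (fun j => \sum_x s x * q x j).
Proof.
apply: vN_entropy_diag => [j|j j']; first by apply: sumr_ge0 => x _.
rewrite /rhoC /ptrace1 sum_pair /rhoABC /=.
case: (eqVneq j j') => [_|_]; last by apply: big1 => x _; apply: big1 => b _; rewrite andbF.
by rewrite rmorph_sum; apply: eq_bigr => x _; under eq_bigr do rewrite !eqxx; exact: weighted_norm.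
Qed.

Lemma vN_entropy_rhoAC :
  vN_entropy (rhoAC s chi q) = shannon (fun u : X * J => s u.1 * q u.1 u.2).
Proof.
apply: vN_entropy_diag => [[x j]|[x j] [x' j']] //; rewrite /rhoAC /rhoABC /= xpair_eqE.
by case: ifP => _; [exact: weighted_norm | apply: big1].
Qed.

Lemma vN_entropy_rhoABC :
  vN_entropy (rhoABC s chi q) = shannon (fun u : X * J => s u.1 * q u.1 u.2).
Proof.
pose e (p : 'I_d * (X * J)) := ((p.2.1, p.1), p.2.2).
pose g (u : (X * 'I_d) * J) := (u.1.2, (u.1.1, u.2)).
have eK : cancel e g by case=> ? [].
have gK : cancel g e by case=> -[].
pose sig (y : X * J) := mixture (fun _ : unit => s y.1 * q y.1 y.2) (fun _ => chi y.1).
rewrite (@vN_entropy_block_diag _ _ _ _ e g eK gK _ sig) => [|y|].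
- by rewrite /shannon; apply: eq_bigr => -[x j] _; exact: vN_entropy_rank1.
- exact: psd_mixture.
apply/funext => u; apply/funext => u'; move: u u'; apply: (can_ind2 gK) => b [x j] b' [x' j'].
rewrite block_opE // /rhoABC /sig /mixture /= (big_pred1 tt) // xpair_eqE.
by case: ifP => _; rewrite ?mul0r // mul1r [chi x b * _]mulrC.
Qed.

Lemma vN_entropy_rhoBC : vN_entropy (rhoBC s chi q) =
  \sum_j vN_entropy (mixture (fun x => s x * q x j) chi).
Proof.
pose sig j := mixture (fun x => s x * q x j) chi.
have idK : cancel (@id ('I_d * J)) id by [].
rewrite (@vN_entropy_block_diag _ _ _ _ id id idK idK _ sig) // => [y|].
  exact: psd_mixture.
apply/funext => u; apply/funext => u'; rewrite /block_op /sig /rhoBC /rhoABC /mixture /=.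
rewrite mulr_sumr; apply: eq_bigr => x _; rewrite eqxx /=.
by case: ifP => _; rewrite ?mul0r // mul1r [chi x u.1 * _]mulrC.
Qed.

Lemma mutinf_ACE : mutinf_AC s chi q =
  shannon s + shannon (fun j => \sum_x s x * q x j)
  - shannon (fun u : X * J => s u.1 * q u.1 u.2).
Proof. by rewrite /mutinf_AC vN_entropy_rhoA vN_entropy_rhoC vN_entropy_rhoAC. Qed.

(* [S(ABC) = S(AC)] because the [B] part of each classical branch is pure. *)
Lemma cmi_AB_CE : cmi_AB_C s chi q =
  \sum_j vN_entropy (mixture (fun x => s x * q x j) chi)
  - shannon (fun j => \sum_x s x * q x j).
Proof.
rewrite /cmi_AB_C vN_entropy_rhoAC vN_entropy_rhoABC vN_entropy_rhoBC vN_entropy_rhoC.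
lra.
Qed.

End CQState.

Section UnitaryMixing.
Variables (R : realType) (d : nat) (I K J : finType).
Variables (p : I -> R) (phi : I -> 'I_d -> R[i]) (a : K -> R) (U : K -> op R 'I_d).
Variable q : I * K -> J -> R.
Hypotheses (p_dist : prob_dist p) (phi_unit : forall i, unit_vector (phi i))
  (a_dist : prob_dist a) (U_unitary : forall k, unitary (U k)) (q_dist : cond_dist q).

Definition cond_with_label : I -> J * K -> R := fun i jk => a jk.2 * q (i, jk.2) jk.1.

Local Notation sF := (fun ik : I * K => p ik.1 * a ik.2).
Local Notation chiF := (fun ik : I * K => apply_op (U ik.2) (phi ik.1)).

Let p_ge0 i : 0 <= p i. Proof. by case: p_dist. Qed.
Let a_ge0 k : 0 <= a k. Proof. by case: a_dist. Qed.
Let q_ge0 ik j : 0 <= q ik j. Proof. by case: (q_dist ik). Qed.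
Let q_sum1 ik : \sum_j q ik j = 1. Proof. by case: (q_dist ik). Qed.
Let sF_ge0 ik : 0 <= sF ik. Proof. by rewrite mulr_ge0. Qed.
Let chiF_unit ik : unit_vector (chiF ik). Proof. exact: unit_vector_apply. Qed.

Let pJK j k := \sum_i p i * (a k * q (i, k) j).

Let pJK_ge0 j k : 0 <= pJK j k.
Proof. by apply: sumr_ge0 => i _; rewrite !mulr_ge0. Qed.

Let pJK_sumJ k : \sum_j pJK j k = a k.
Proof.
rewrite /pJK exchange_big /=.
under eq_bigr do rewrite -!mulr_sumr q_sum1 mulr1.
by rewrite -mulr_suml (proj2 p_dist) mul1r.
Qed.

Let pJK_sumK j : \sum_ik sF ik * q ik j = \sum_k pJK j k.
Proof.
by rewrite sum_pair exchange_big /=; apply: eq_bigr => k _; apply: eq_bigr => i _; rewrite mulrA.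
Qed.

Lemma cond_dist_with_label : cond_dist cond_with_label.
Proof.
move=> i; split=> [[j k]|]; first by rewrite mulr_ge0.
rewrite sum_pair exchange_big /= -(proj2 a_dist); apply: eq_bigr => k _.
by rewrite /cond_with_label /= -mulr_sumr q_sum1 mulr1.
Qed.

Lemma mutinf_AC_with_label : mutinf_AC p phi cond_with_label <= mutinf_AC sF chiF q.
Proof.
rewrite !mutinf_ACE //; last exact: cond_dist_with_label.
have joint : shannon (fun u : I * (J * K) => p u.1 * cond_with_label u.1 u.2) =
    shannon (fun u : I * K * J => sF u.1 * q u.1 u.2).
  rewrite /shannon sum_pair [RHS]sum_pair [RHS]sum_pair; apply: eq_bigr => i _.
  rewrite sum_pair exchange_big /=; apply: eq_bigr => k _; apply: eq_bigr => j _.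
  by rewrite /= mulrA.
rewrite joint shannon_prod // (shannon_pair pJK) (funext pJK_sumK).
have := shannon_subadd pJK_ge0.
have total : \sum_j \sum_k pJK j k = 1.
  by rewrite exchange_big /= (eq_bigr _ (fun k _ => pJK_sumJ k)) (proj2 a_dist).
rewrite (funext pJK_sumJ) total eta1.
lra.
Qed.

Lemma cmi_AB_C_with_label : cmi_AB_C p phi cond_with_label <= cmi_AB_C sF chiF q.
Proof.
rewrite !cmi_AB_CE //; last exact: cond_dist_with_label.
rewrite (shannon_pair pJK) (funext pJK_sumK) sum_pair /shannon -!sumrB.
apply: ler_sum => j _.
pose w i k := p i * (a k * q (i, k) j).
have w_ge0 i k : 0 <= w i k by rewrite !mulr_ge0.
have := vN_entropy_mixture_cond_le (w := w) (v := fun i k => apply_op (U k) (phi i)) w_ge0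
  (fun i k => unit_vector_apply (U_unitary k) (phi_unit i)).
have -> : (fun u : I * K => w u.1 u.2) = fun ik => sF ik * q ik j.
  by apply/funext => -[i k]; rewrite /w /= mulrA.
rewrite exchange_big /= sumrB /=.
by under eq_bigr do rewrite vN_entropy_apply_unitary //.
Qed.

End UnitaryMixing.

Unset Implicit Arguments. Set Strict Implicit.

Theorem proposition5p2 (R : realType) (d : nat) (I K : finType)
  (p : I -> R) (phi : I -> 'I_d -> R[i]) (a : K -> R) (U : K -> op R 'I_d) :
  prob_dist p ->
  (forall i, unit_vector (phi i)) ->
  prob_dist a ->
  (forall k, unitary (U k)) ->
  forall r : R, 0 <= r ->
  (M_fun p phi r <=
   M_fun (fun ik : (I * K)%type => (p ik.1 * a ik.2)%R)
         (fun ik : (I * K)%type => fun b => (\sum_c U ik.2 b c * phi ik.1 c)%R) r)%E.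
Proof.
move=> p_dist phi_unit a_dist U_unitary r _.
apply: le_ereal_inf_tmp => _ [J [q [q_dist mi_le ->]]].
apply: le_trans (ereal_inf_lbound _) _.
  exists (J * K)%type, (cond_with_label a q); split => //.
  - exact: cond_dist_with_label.
  - exact: le_trans (mutinf_AC_with_label p_dist phi_unit a_dist U_unitary q_dist) mi_le.
by rewrite lee_fin; exact: cmi_AB_C_with_label.
Qed.
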